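(* Let $\mathbf C$ satisfy (C1)–(C4) as in the context. Then $\mathcal M_1^{\mathcal X,\mathcal T}(\mathbf C)$ is non-empty. Further, the market comprising the stock, the bond and the call options (trading at the prices $\mathbf C$) is arbitrage free.
   Context: Fix integers $N\ge1$, $J\ge1$, times $0=t_0<t_1<\dots<t_N=T$, $\mathcal T=\{t_1,\dots,t_N\}$, an initial discounted stock price $s_0>0$, strikes $0<x_1<\dots<x_J$, $x_0=0$, $\mathcal X=\{x_0,\dots,x_J\}$. Interest rates are zero after discounting. $\mathbf C=(c_{j,n})_{0\le j\le J,1\le n\le N}$, with $c_{0,n}=s_0$, is the matrix of prices of the calls paying $(X_{t_n}-x_j)^+$ at $t_n$, and satisfies: (C1) $s_0=c_{0,n}\ge c_{1,n}\ge\dots\ge c_{J,n}\ge0$; (C2) $1\ge\frac{c_{0,n}-c_{1,n}}{x_1}\ge\frac{c_{1,n}-c_{2,n}}{x_2-x_1}\ge\dots\ge\frac{c_{J-1,n}-c_{J,n}}{x_J-x_{J-1}}$; (C3) $c_{j,n+1}\ge c_{j,n}$ for $1\le n\le N-1$; (C4) $c_{J,N}=0$. Set $p_{0,n}=1-\frac{s_0-c_{1,n}}{x_1}$, $p_{j,n}=\frac{c_{j-1,n}-c_{j,n}}{x_j-x_{j-1}}-\frac{c_{j,n}-c_{j+1,n}}{x_{j+1}-x_j}$ ($1\le j<J$), $p_{J,n}=\frac{c_{J-1,n}-c_{J,n}}{x_J-x_{J-1}}$. $\mathcal M^{\mathcal X,\mathcal T}(\mathbf C)$ is the set of models: a filtered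 probability space $(\mathcal F_{t_n})_{0\le n\le N}$ with an adapted martingale $(X_{t_n})_{0\le n\le N}$, $X_{t_0}=s_0$, $X_{t_n}\in\mathcal X$ and $\mathbb P(X_{t_n}=x_j)=p_{j,n}$ for $n\ge1$ (equivalently $\mathbb E[(X_{t_n}-x_j)^+]=c_{j,n}$). $\mathcal M_1^{\mathcal X,\mathcal T}(\mathbf C)$ is the subset of those models in which $X$ is Markov: $\mathbb P(X_{t_{n+1}}=x_k\mid\mathcal F_{t_n})=\mathbb P(X_{t_{n+1}}=x_k\mid X_{t_n})$. *)

From mathcomp Require Import all_boot all_order all_algebra.
Set Implicit Arguments. Unset Strict Implicit. Unset Printing Implicit Defensive.
Import Order.TTheory GRing.Theory Num.Theory.
Local Open Scope ring_scope.

Section Market.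
Variables (R : realFieldType) (N J : nat) (s0 : R) (x : nat -> R) (c : nat -> nat -> R).
(* Conventions: strikes x_0..x_J as [x 0 .. x J]; call prices c_{j,n} as
   [c j n] for 0 <= j <= J, 1 <= n <= N (values outside are irrelevant). *)

Definition slope (j n : nat) : R := (c j.-1 n - c j n) / (x j - x j.-1).

Definition C1 : Prop := forall n, (1 <= n <= N)%N ->
  [/\ c 0%N n = s0, (forall j, (j < J)%N -> c j.+1 n <= c j n) & 0 <= c J n].
Definition C2 : Prop := forall n, (1 <= n <= N)%N ->
  (c 0%N n - c 1%N n) / x 1%N <= 1 /\
  (forall j, (1 <= j < J)%N -> slope j.+1 n <= slope j n).
Definition C3 : Prop := forall j n, (j <= J)%N -> (1 <= n < N)%N -> c j n <= c j n.+1.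
Definition C4 : Prop := c J N = 0.

Definition pj (j n : nat) : R :=
  if j == 0%N then 1 - (s0 - c 1%N n) / x 1%N
  else if (j < J)%N then slope j n - slope j.+1 n
  else slope J n.

(* Canonical path space: a path w gives X_{t_n} = x_(w (n-1)) for n = 1..N. *)
Definition path := {ffun 'I_N -> 'I_J.+1}.

Definition Xt (w : path) (m : nat) : R :=
  if m is m'.+1 then oapp (fun i : 'I_N => x (w i)) 0 (insub m' : option 'I_N)
  else s0.

(* w and w' agree at times t_1..t_m (same atom of the natural F_{t_m}). *)
Definition agree (m : nat) (w w' : path) : bool :=
  [forall i : 'I_N, (i < m)%N ==> (w i == w' i)].

Definition prob (P : {ffun path -> R}) (A : pred path) : R := \sum_(w | A w) P w.

(* P is the law on the canonical space (natural filtration) of a model in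
   M_1^{X,T}(C): probability, marginals p_{j,n}, martingale, Markov. *)
Definition markov_model (P : {ffun path -> R}) : Prop :=
  [/\ (forall w, 0 <= P w), \sum_w P w = 1,
      (forall n j, (1 <= n <= N)%N -> (j <= J)%N ->
          prob P [pred w | Xt w n == x j] = pj j n),
      (* E[X_{t_{n+1}} | F_{t_n}] = X_{t_n}, n = 0..N-1 *)
      (forall n w0, (n < N)%N ->
          \sum_(w | agree n w w0) P w * (Xt w n.+1 - Xt w n) = 0) &
      (* P(X_{t_{n+1}} = x_k | F_{t_n}) = P(X_{t_{n+1}} = x_k | X_{t_n}),
         written without division on each atom of F_{t_n} *)
      (forall n w0 k, (1 <= n < N)%N -> (k <= J)%N ->
          prob P [pred w | agree n w w0 && (Xt w n.+1 == x k)]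
            * prob P [pred w | Xt w n == Xt w0 n]
          = prob P [pred w | agree n w w0]
            * prob P [pred w | (Xt w n == Xt w0 n) && (Xt w n.+1 == x k)])].

(* Semi-static strategies: b units of bond, a j n calls (X_{t_n}-x_j)^+,
   dynamic stock holding delta n over [t_n, t_{n+1}], adapted. *)
Definition adapted (delta : nat -> path -> R) : Prop :=
  forall n w w', agree n w w' -> delta n w = delta n w'.

Definition cost (b : R) (a : nat -> nat -> R) : R :=
  b + \sum_(0 <= j < J.+1) \sum_(1 <= n < N.+1) a j n * c j n.

Definition payoff (b : R) (a : nat -> nat -> R) (delta : nat -> path -> R)
    (w : path) : R :=
  b + \sum_(0 <= j < J.+1) \sum_(1 <= n < N.+1) a j n * Num.max 0 (Xt w n - x j)
    + \sum_(0 <= n < N) delta n w * (Xt w n.+1 - Xt w n).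

Definition arbitrage : Prop :=
  exists b a delta, [/\ adapted delta, cost b a <= 0 & forall w, 0 < payoff b a delta w].

End Market.

(* The numbers p_{j,n} are the second differences of the call prices in the strike, so
   (C1)-(C2) make each column of C the call prices of a probability law on the strike grid
   with mean s0, and (C3) says that these call prices increase with maturity, i.e. the
   marginals increase in convex order.  On a finite grid this order is realized by a
   martingale kernel (a discrete Strassen theorem): split every atom sitting at a strike
   where the call prices still differ between the nearest strikes on either side where they
   agree, and mix this spread with the identity just enough to make one more strike agree;
   finitely many such steps reach the target law.  Chaining the kernels gives a Markov
   martingale with the prescribed marginals, and under its law the expected payoff of every
   semi-static strategy equals its cost, which rules out an arbitrage. *)

From Pilot Require Import Defs.
From mathcomp Require Import all_boot all_order all_algebra.
From mathcomp Require Import ring lra.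
Set Implicit Arguments. Unset Strict Implicit. Unset Printing Implicit Defensive.
Import Order.TTheory GRing.Theory Num.Theory.
Local Open Scope ring_scope.

Section CallPayoff.
Variable R : realFieldType.
Implicit Types u v y a t : R.

Lemma call_affine_in_spot u y v a : u < v -> u <= y <= v -> a <= u \/ v <= a ->
  (v - y) / (v - u) * Num.max 0 (u - a) + (y - u) / (v - u) * Num.max 0 (v - a)
  = Num.max 0 (y - a).
Proof.
move=> uv /andP[uy yv] [au|va]; first by rewrite !max_r; [field|..]; lra.
by rewrite !max_l; [ring|..]; lra.
Qed.

Lemma call_affine_in_strike u y v t : u < v -> u <= y <= v -> t <= u \/ v <= t ->
  (v - y) / (v - u) * Num.max 0 (t - u) + (y - u) / (v - u) * Num.max 0 (t - v)
  = Num.max 0 (t - y).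
Proof.
move=> uv /andP[uy yv] [tu|vt]; first by rewrite !max_l; [ring|..]; lra.
by rewrite !max_r; [field|..]; lra.
Qed.

Lemma call_convex_in_strike u y v t : u < v -> u <= y <= v ->
  Num.max 0 (t - y)
  <= (v - y) / (v - u) * Num.max 0 (t - u) + (y - u) / (v - u) * Num.max 0 (t - v).
Proof.
move=> uv /andP[uy yv].
have wu : 0 <= (v - y) / (v - u) by apply: divr_ge0; lra.
have wv : 0 <= (y - u) / (v - u) by apply: divr_ge0; lra.
rewrite ge_max; apply/andP; split.
  by apply: addr_ge0; apply: mulr_ge0; rewrite // le_max lexx.
have -> : t - y = (v - y) / (v - u) * (t - u) + (y - u) / (v - u) * (t - v) by field; lra.
by apply: lerD; apply: ler_wpM2l; rewrite // le_max lexx orbT.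
Qed.

End CallPayoff.

Lemma expectation_gt0 (R : realFieldType) (T : finType) (P f : T -> R) :
  (forall w, 0 <= P w) -> \sum_w P w = 1 -> (forall w, 0 < f w) -> 0 < \sum_w P w * f w.
Proof.
move=> P_ge0 P_sum1 f_gt0; have [w1 w1_pos|P_eq0] := pickP (fun w => 0 < P w).
  rewrite (bigD1 w1) //= ltr_pwDl ?mulr_gt0 // sumr_ge0 // => w _.
  by rewrite mulr_ge0 // ltW.
suff : \sum_w P w = 0 by rewrite P_sum1 => /eqP; rewrite oner_eq0.
by apply: big1 => w _; apply/eqP; rewrite eq_le P_ge0 andbT leNgt P_eq0.
Qed.

Section GridKernels.
Variables (R : realFieldType) (J : nat) (x : nat -> R).
Hypothesis x_incr : forall j, (j < J)%N -> x j < x j.+1.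

Lemma x_lt i j : (i < j)%N -> (j <= J)%N -> x i < x j.
Proof.
elim: j => // j IH; rewrite ltnS leq_eqVlt => /orP[/eqP->|lij] hj; first exact: x_incr.
exact: lt_trans (IH lij (ltnW hj)) (x_incr hj).
Qed.

Lemma x_le i j : (i <= j)%N -> (j <= J)%N -> x i <= x j.
Proof. by rewrite leq_eqVlt => /orP[/eqP->|lij] hj; [rewrite lexx | apply/ltW/x_lt]. Qed.

Lemma x_eq i j : (i <= J)%N -> (j <= J)%N -> (x i == x j) = (i == j).
Proof.
move=> hi hj; case: (ltngtP i j) => h; last by rewrite h eqxx.
  by rewrite lt_eqF // x_lt.
by rewrite gt_eqF // x_lt.
Qed.

Lemma leq_ord (i : 'I_J.+1) : (i <= J)%N.
Proof. by rewrite -ltnS ltn_ord. Qed.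

Definition call (k m : nat) : R := Num.max 0 (x m - x k).
Definition kid (i k : nat) : R := (i == k)%:R.
Definition kexp (K : nat -> nat -> R) (h : nat -> R) (i : nat) : R :=
  \sum_(k < J.+1) K i k * h k.
Definition kpush (p : nat -> R) (K : nat -> nat -> R) (k : nat) : R :=
  \sum_(i < J.+1) p i * K i k.
Definition kcomp (K L : nat -> nat -> R) (i k : nat) : R :=
  \sum_(m < J.+1) K i m * L m k.
Definition martingale_kernel (K : nat -> nat -> R) : Prop := forall i, (i <= J)%N ->
  [/\ forall k, (k <= J)%N -> 0 <= K i k, kexp K (fun=> 1) i = 1 & kexp K x i = x i].

Definition mass (p : nat -> R) : R := \sum_(i < J.+1) p i.
Definition mean (p : nat -> R) : R := \sum_(i < J.+1) p i * x i.
Definition tail_mass (p : nat -> R) (k : nat) : R := \sum_(k <= i < J.+1) p i.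
Definition call_price (p : nat -> R) (k : nat) : R := \sum_(i < J.+1) p i * call k i.

Lemma sum_kpush p K (h : nat -> R) :
  \sum_(k < J.+1) kpush p K k * h k = \sum_(i < J.+1) p i * kexp K h i.
Proof.
under eq_bigr do rewrite big_distrl /=.
rewrite exchange_big; apply: eq_bigr => i _; rewrite big_distrr /=.
by apply: eq_bigr => k _; rewrite mulrA.
Qed.

Lemma sum_kid_mul (h : nat -> R) i : (i <= J)%N -> \sum_(k < J.+1) kid i k * h k = h i.
Proof.
move=> hi; under eq_bigr do rewrite /kid mulr_natl mulrb eq_sym.
by rewrite -big_mkcond big_ord1_eq ltnS hi.
Qed.

Lemma kpush_kid p k : (k <= J)%N -> kpush p kid k = p k.
Proof.
move=> hk; rewrite -[RHS](sum_kid_mul p hk); apply: eq_bigr => i _.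
by rewrite /kid eq_sym mulrC.
Qed.

Lemma martingale_kernel_kid : martingale_kernel kid.
Proof.
by move=> i hi; split; rewrite /kexp ?(sum_kid_mul (fun=> 1)) ?sum_kid_mul // => k _; rewrite ler0n.
Qed.

Lemma kexp_kcomp K L (h : nat -> R) i : kexp (kcomp K L) h i = kexp K (kexp L h) i.
Proof.
rewrite /kexp /kcomp; under eq_bigr do rewrite big_distrl /=.
rewrite exchange_big; apply: eq_bigr => m _; rewrite big_distrr /=.
by apply: eq_bigr => k _; rewrite mulrA.
Qed.

Lemma kpush_kcomp p K L k : kpush (kpush p K) L k = kpush p (kcomp K L) k.
Proof. exact: (sum_kpush p K (fun m => L m k)). Qed.

Lemma martingale_kernel_kcomp K L :
  martingale_kernel K -> martingale_kernel L -> martingale_kernel (kcomp K L).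
Proof.
move=> hK hL i hi; have [K0 K1 Kx] := hK i hi.
split; rewrite ?kexp_kcomp.
- move=> k hk; apply: sumr_ge0 => m _; have [L0 _ _] := hL m (leq_ord m).
  by apply: mulr_ge0; [apply: K0; exact: leq_ord | exact: L0].
- rewrite -[RHS]K1; apply: eq_bigr => m _.
  by have [_ -> _] := hL m (leq_ord m).
- rewrite -[RHS]Kx; apply: eq_bigr => m _.
  by have [_ _ ->] := hL m (leq_ord m).
Qed.

Lemma kpush_ge0 p K : martingale_kernel K -> (forall i, (i <= J)%N -> 0 <= p i) ->
  forall k, (k <= J)%N -> 0 <= kpush p K k.
Proof.
move=> hK hp k hk; apply: sumr_ge0 => i _; have [K0 _ _] := hK i (leq_ord i).
by apply: mulr_ge0; [exact: hp (leq_ord i) | exact: K0].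
Qed.

Lemma mass_kpush p K : martingale_kernel K -> mass (kpush p K) = mass p.
Proof.
move=> hK; rewrite /mass; under eq_bigr do rewrite -[kpush _ _ _]mulr1.
rewrite (sum_kpush p K (fun=> 1)); apply: eq_bigr => i _.
by have [_ -> _] := hK i (leq_ord i); rewrite mulr1.
Qed.

Lemma mean_kpush p K : martingale_kernel K -> mean (kpush p K) = mean p.
Proof.
move=> hK; rewrite /mean sum_kpush; apply: eq_bigr => i _.
by have [_ _ ->] := hK i (leq_ord i).
Qed.

Lemma call_price_kpush p K k :
  call_price (kpush p K) k = \sum_(i < J.+1) p i * kexp K (call k) i.
Proof. exact: sum_kpush. Qed.

Lemma call_priceJ p : call_price p J = 0.
Proof.
by apply: big1 => i _; rewrite /call max_l ?mulr0 // subr_le0 x_le ?leq_ord.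
Qed.

Lemma call_price0 p : call_price p 0 = mean p - x 0 * mass p.
Proof.
rewrite /call_price /mean /mass mulr_sumr -sumrB; apply: eq_bigr => i _.
by rewrite /call max_r ?subr_ge0 ?x_le ?leq_ord //; ring.
Qed.

Lemma tail_mass_ord p k : tail_mass p k = \sum_(i < J.+1 | (k <= i)%N) p i.
Proof. by rewrite /tail_mass big_geq_mkord. Qed.

Lemma tail_massS p k : (k <= J)%N -> tail_mass p k = p k + tail_mass p k.+1.
Proof. by move=> hk; rewrite /tail_mass big_ltn // ltnS. Qed.

Lemma tail_mass_end p : tail_mass p J.+1 = 0.
Proof. by rewrite /tail_mass big_geq. Qed.

Lemma tail_mass0 p : tail_mass p 0 = mass p.
Proof. by rewrite /tail_mass big_mkord. Qed.

Lemma call_price_diff p k : (0 < k <= J)%N ->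
  call_price p k.-1 - call_price p k = (x k - x k.-1) * tail_mass p k.
Proof.
case/andP=> k0 kJ; rewrite tail_mass_ord -sumrB mulr_sumr [RHS]big_mkcond /=.
apply: eq_bigr => i _; rewrite /call; case: leqP => ki.
  have ki' : (k.-1 <= i)%N by exact: leq_trans (leq_pred k) ki.
  by rewrite !max_r ?subr_ge0 ?x_le ?leq_ord //; ring.
have kJ' : (k.-1 <= J)%N by exact: leq_trans (leq_pred k) kJ.
have ik : (i <= k.-1)%N by rewrite -ltnS prednK.
by rewrite !max_l ?mulr0 ?subrr // subr_le0 x_le // ltnW.
Qed.

Lemma eq_of_call_price p q : mass p = mass q ->
  (forall k, (k <= J)%N -> call_price p k = call_price q k) ->
  forall k, (k <= J)%N -> p k = q k.
Proof.
move=> hm hC.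
have ht k : (k <= J.+1)%N -> tail_mass p k = tail_mass q k.
  case: k => [|k] hk; first by rewrite !tail_mass0.
  move: hk; rewrite leq_eqVlt => /orP[/eqP[->]|hk]; first by rewrite !tail_mass_end.
  have hk' : (0 < k.+1 <= J)%N by [].
  have := call_price_diff p hk'.
  rewrite (hC k (ltnW hk)) (hC k.+1 hk) (call_price_diff q hk').
  have gap_neq0 : x k.+1 - x k != 0 by rewrite subr_eq0 gt_eqF // x_incr.
  by move/(mulfI gap_neq0).
move=> k hk; have := tail_massS p hk.
by rewrite ht ?(leq_trans hk) // tail_massS // ht //; move/addIr.
Qed.

Section SpreadStep.
Variables p q : nat -> R.
Hypothesis q_ge0 : forall i, (i <= J)%N -> 0 <= q i.
Hypothesis mass_eq : mass p = mass q.
Hypothesis mean_eq : mean p = mean q.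
Hypothesis call_price_le : forall k, (k <= J)%N -> call_price p k <= call_price q k.

Definition tight (k : nat) : bool := call_price p k == call_price q k.

Lemma tight0 : tight 0. Proof. by rewrite /tight !call_price0 mass_eq mean_eq. Qed.
Lemma tightJ : tight J. Proof. by rewrite /tight !call_priceJ. Qed.

Definition prev_tight (i : nat) : nat :=
  arg_max (ord0 : 'I_J.+1) (fun k : 'I_J.+1 => ((k : nat) < i)%N && tight k) val.
Definition next_tight (i : nat) : nat :=
  arg_min (ord_max : 'I_J.+1) (fun k : 'I_J.+1 => (i < k)%N && tight k) val.

Lemma prev_tight_le i : (prev_tight i <= J)%N. Proof. exact: leq_ord. Qed.
Lemma next_tight_le i : (next_tight i <= J)%N. Proof. exact: leq_ord. Qed.

Lemma prev_tightP i : (i <= J)%N -> ~~ tight i ->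
  [/\ (prev_tight i < i)%N, tight (prev_tight i)
    & forall k, (k <= J)%N -> (k < i)%N -> tight k -> (k <= prev_tight i)%N].
Proof.
move=> hi ti; have i0 : (0 < i)%N by case: i hi ti => // _; rewrite tight0.
rewrite /prev_tight; case: arg_maxnP => [|j /andP[ji tj] jmax]; first by rewrite /= i0 tight0.
split=> // k hk ki tk; have := jmax (inord k); rewrite /= inordK ?ltnS //.
by apply; rewrite ki tk.
Qed.

Lemma next_tightP i : (i <= J)%N -> ~~ tight i ->
  [/\ (i < next_tight i)%N, tight (next_tight i)
    & forall k, (k <= J)%N -> (i < k)%N -> tight k -> (next_tight i <= k)%N].
Proof.
move=> hi ti; have iJ : (i < J)%N.
  by rewrite ltn_neqAle hi andbT; apply: contraNneq ti => ->; rewrite tightJ.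
rewrite /next_tight; case: arg_minnP => [|j /andP[ij tj] jmin]; first by rewrite /= iJ tightJ.
split=> // k hk ik tk; have := jmin (inord k); rewrite /= inordK ?ltnS //.
by apply; rewrite ik tk.
Qed.

Lemma tight_outside i m : (i <= J)%N -> ~~ tight i -> (m <= J)%N -> tight m ->
  (m <= prev_tight i)%N \/ (next_tight i <= m)%N.
Proof.
move=> hi ti hm tm; have [_ _ hprev] := prev_tightP hi ti.
have [_ _ hnext] := next_tightP hi ti.
case: (ltngtP m i) => hmi; [left; exact: hprev | right; exact: hnext |].
by move: ti; rewrite -hmi tm.
Qed.

Lemma x_tight_bracket i : (i <= J)%N -> ~~ tight i ->
  x (prev_tight i) < x i /\ x i < x (next_tight i).
Proof.
move=> hi ti; have [h1 _ _] := prev_tightP hi ti; have [h2 _ _] := next_tightP hi ti.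
by split; apply: x_lt => //; apply: next_tight_le.
Qed.

Definition left_weight i :=
  (x (next_tight i) - x i) / (x (next_tight i) - x (prev_tight i)).
Definition right_weight i :=
  (x i - x (prev_tight i)) / (x (next_tight i) - x (prev_tight i)).

(* The spread preserves the mean of each atom and leaves call prices at tight strikes unchanged. *)
Definition spread (i k : nat) : R :=
  if tight i then kid i k
  else left_weight i * kid (prev_tight i) k + right_weight i * kid (next_tight i) k.

Lemma kexp_spread (h : nat -> R) i : (i <= J)%N -> kexp spread h i =
  if tight i then h i else left_weight i * h (prev_tight i) + right_weight i * h (next_tight i).
Proof.
move=> hi; rewrite /kexp /spread; case: (tight i); first exact: sum_kid_mul.
rewrite -(sum_kid_mul h (prev_tight_le i)) -(sum_kid_mul h (next_tight_le i)).
by rewrite !mulr_sumr -big_split /=; apply: eq_bigr => k _; ring.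
Qed.

Lemma martingale_kernel_spread : martingale_kernel spread.
Proof.
move=> i hi; case: (boolP (tight i)) => ti.
  have [K0 K1 Kx] := martingale_kernel_kid hi.
  by split; rewrite ?kexp_spread ?ti // => k hk; rewrite /spread ti; apply: K0.
have [h1 h2] := x_tight_bracket hi ti.
have wl : 0 <= left_weight i by apply: divr_ge0; lra.
have wr : 0 <= right_weight i by apply: divr_ge0; lra.
split; first by move=> k hk; rewrite /spread (negbTE ti) addr_ge0 // mulr_ge0 ?ler0n.
  by rewrite kexp_spread // (negbTE ti) /left_weight /right_weight; field; lra.
by rewrite kexp_spread // (negbTE ti) /left_weight /right_weight; field; lra.
Qed.

Definition spread_price (k : nat) : R := \sum_(i < J.+1) p i * kexp spread (call k) i.

Lemma spread_price_tight z : (z <= J)%N -> tight z -> spread_price z = call_price p z.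
Proof.
move=> hz tz; apply: eq_bigr => i _; congr (_ * _); rewrite kexp_spread ?leq_ord //.
case: ifP => // /negbT ti; have [h1 h2] := x_tight_bracket (leq_ord i) ti.
rewrite /call /left_weight /right_weight; apply: call_affine_in_spot; first lra.
  by rewrite !ltW.
case: (tight_outside (leq_ord i) ti hz tz) => hg; [left | right]; apply: x_le => //.
exact: prev_tight_le.
Qed.

Lemma call_affine_between_tight k m : (k <= J)%N -> ~~ tight k -> (m <= J)%N -> tight m ->
  call k m = left_weight k * call (prev_tight k) m + right_weight k * call (next_tight k) m.
Proof.
move=> hk tk hm tm; have [h1 h2] := x_tight_bracket hk tk.
rewrite /call /left_weight /right_weight call_affine_in_strike //; first lra.
  by rewrite !ltW.
case: (tight_outside hk tk hm tm) => hg; [left | right]; apply: x_le => //.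
exact: prev_tight_le.
Qed.

Lemma spread_price_affine k : (k <= J)%N -> ~~ tight k -> spread_price k =
  left_weight k * spread_price (prev_tight k) + right_weight k * spread_price (next_tight k).
Proof.
move=> hk tk; rewrite /spread_price !mulr_sumr -big_split /=; apply: eq_bigr => i _.
rewrite !kexp_spread ?leq_ord //; case: ifP => ti.
  by rewrite (call_affine_between_tight hk tk (leq_ord i) ti); ring.
have [_ tp _] := prev_tightP (leq_ord i) (negbT ti).
have [_ tn _] := next_tightP (leq_ord i) (negbT ti).
rewrite (call_affine_between_tight hk tk (prev_tight_le i) tp).
by rewrite (call_affine_between_tight hk tk (next_tight_le i) tn); ring.
Qed.

Lemma call_price_convex k : (k <= J)%N -> ~~ tight k -> call_price q k <=
  left_weight k * call_price q (prev_tight k) + right_weight k * call_price q (next_tight k).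
Proof.
move=> hk tk; have [h1 h2] := x_tight_bracket hk tk.
rewrite /call_price !mulr_sumr -big_split /=; apply: ler_sum => i _; rewrite /call.
rewrite mulrCA [X in _ <= _ + X]mulrCA -mulrDr ler_wpM2l ?q_ge0 ?leq_ord //.
by rewrite /left_weight /right_weight call_convex_in_strike // ?ltW //; lra.
Qed.

Lemma call_price_le_spread k : (k <= J)%N -> ~~ tight k -> call_price q k <= spread_price k.
Proof.
move=> hk tk; have [_ tp _] := prev_tightP hk tk; have [_ tn _] := next_tightP hk tk.
rewrite spread_price_affine // !spread_price_tight ?prev_tight_le ?next_tight_le //.
by rewrite (eqP tp) (eqP tn) call_price_convex.
Qed.

Definition slack k := call_price q k - call_price p k.
Definition spread_gain k := spread_price k - call_price p k.

Lemma slack_spread_gain k : (k <= J)%N -> ~~ tight k -> 0 < slack k <= spread_gain k.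
Proof.
move=> hk tk; have h1 := call_price_le hk; have h2 := call_price_le_spread hk tk.
rewrite /slack /spread_gain subr_gt0 lt_def eq_sym tk h1 /=; lra.
Qed.

Variable k0 : 'I_J.+1.
Hypothesis k0_loose : ~~ tight k0.

(* The largest weight for which mixing the spread into the identity keeps every call price
   below that of q; the mixture is tight at kstar. *)
Definition kstar : 'I_J.+1 :=
  Order.arg_min k0 (fun k : 'I_J.+1 => ~~ tight k) (fun k => slack k / spread_gain k).
Definition lambda := slack kstar / spread_gain kstar.

Lemma kstarP :
  ~~ tight kstar /\ forall k : 'I_J.+1, ~~ tight k -> lambda <= slack k / spread_gain k.
Proof. by rewrite /lambda /kstar; case: arg_minP. Qed.

Lemma spread_gain_gt0 k : (k <= J)%N -> ~~ tight k -> 0 < spread_gain k.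
Proof. by move=> hk tk; case/andP: (slack_spread_gain hk tk) => /lt_le_trans; apply. Qed.

Lemma lambda_bounds : 0 < lambda <= 1.
Proof.
have [tk _] := kstarP; have /andP[s0 sg] := slack_spread_gain (leq_ord kstar) tk.
have g0 := spread_gain_gt0 (leq_ord kstar) tk.
by rewrite divr_gt0 //= ler_pdivrMr // mul1r.
Qed.

Definition spread_mix (i k : nat) : R := (1 - lambda) * kid i k + lambda * spread i k.

Lemma kexp_spread_mix (h : nat -> R) i : (i <= J)%N ->
  kexp spread_mix h i = (1 - lambda) * h i + lambda * kexp spread h i.
Proof.
move=> hi; rewrite /kexp -{1}(sum_kid_mul h hi) !mulr_sumr -big_split /=.
by apply: eq_bigr => k _; rewrite /spread_mix; ring.
Qed.

Lemma martingale_kernel_spread_mix : martingale_kernel spread_mix.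
Proof.
move=> i hi; have /andP[l0 l1] := lambda_bounds.
have [S0 S1 Sx] := martingale_kernel_spread hi.
split; rewrite ?kexp_spread_mix // ?S1 ?Sx; try ring.
move=> k hk; rewrite addr_ge0 // mulr_ge0 ?ler0n ?S0 ?subr_ge0 //; exact: ltW.
Qed.

Lemma call_price_spread_mix k :
  call_price (kpush p spread_mix) k = call_price p k + lambda * spread_gain k.
Proof.
rewrite call_price_kpush /spread_gain /spread_price /call_price mulrBr.
rewrite !mulr_sumr -sumrB -big_split /=; apply: eq_bigr => i _.
rewrite kexp_spread_mix ?leq_ord //; ring.
Qed.

Lemma spread_mix_tight k : (k <= J)%N -> tight k ->
  call_price (kpush p spread_mix) k = call_price q k.
Proof.
move=> hk tk; rewrite call_price_spread_mix /spread_gain spread_price_tight //.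
by rewrite subrr mulr0 addr0; apply/eqP.
Qed.

Lemma spread_mix_le k : (k <= J)%N -> call_price (kpush p spread_mix) k <= call_price q k.
Proof.
move=> hk; case: (boolP (tight k)) => tk; first by rewrite spread_mix_tight.
have g0 := spread_gain_gt0 hk tk; have [_ hmin] := kstarP.
have := hmin (inord k); rewrite inordK ?ltnS // => /(_ tk).
by rewrite ler_pdivlMr // call_price_spread_mix /slack; lra.
Qed.

Lemma spread_mix_kstar : call_price (kpush p spread_mix) kstar = call_price q kstar.
Proof.
have [tk _] := kstarP; have g0 := spread_gain_gt0 (leq_ord kstar) tk.
by rewrite call_price_spread_mix /lambda divfK ?gt_eqF // /slack; ring.
Qed.

Lemma spread_step : exists K, [/\ martingale_kernel K,
  (#|[pred k : 'I_J.+1 | call_price (kpush p K) k != call_price q k]|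
     < #|[pred k : 'I_J.+1 | ~~ tight k]|)%N
  & forall k, (k <= J)%N -> call_price (kpush p K) k <= call_price q k].
Proof.
exists spread_mix; split; [exact: martingale_kernel_spread_mix | | exact: spread_mix_le].
apply: proper_card; apply/properP; split.
  apply/subsetP => k; rewrite !inE; apply: contra => tk.
  by apply/eqP; apply: spread_mix_tight (leq_ord k) tk.
by exists kstar; rewrite !inE ?spread_mix_kstar ?eqxx //; case: kstarP.
Qed.

End SpreadStep.

Lemma martingale_coupling_tight p q : mass p = mass q ->
  (forall k : 'I_J.+1, call_price p k = call_price q k) ->
  exists K, martingale_kernel K /\ forall k, (k <= J)%N -> kpush p K k = q k.
Proof.
move=> hmass htight; exists kid; split=> [|k hk]; first exact: martingale_kernel_kid.
rewrite kpush_kid //; apply: eq_of_call_price => // j hj.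
by have := htight (inord j); rewrite inordK.
Qed.

Lemma martingale_coupling_card n p q :
  (#|[pred k : 'I_J.+1 | call_price p k != call_price q k]| <= n)%N ->
  (forall i, (i <= J)%N -> 0 <= p i) -> (forall i, (i <= J)%N -> 0 <= q i) ->
  mass p = mass q -> mean p = mean q ->
  (forall k, (k <= J)%N -> call_price p k <= call_price q k) ->
  exists K, martingale_kernel K /\ forall k, (k <= J)%N -> kpush p K k = q k.
Proof.
elim: n p => [|n IH] p hcard p_ge0 q_ge0 hmass hmean hle;
  case: (pickP [pred k : 'I_J.+1 | call_price p k != call_price q k]) => [k0 hk0|htight];
  try by apply: martingale_coupling_tight => // k; apply/eqP/negbFE/htight.
  by move: hcard; rewrite leqn0 => /eqP/card0_eq/(_ k0)/negbT/negP.
have [K1 [hK1 hcard1 hle1]] := spread_step q_ge0 hmass hmean hle hk0.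
have [K2 [hK2 hpush2]] := IH (kpush p K1) (leq_trans hcard1 hcard) (kpush_ge0 hK1 p_ge0)
  q_ge0 (etrans (mass_kpush p hK1) hmass) (etrans (mean_kpush p hK1) hmean) hle1.
exists (kcomp K1 K2); split=> [|k hk]; first exact: martingale_kernel_kcomp.
by rewrite -kpush_kcomp hpush2.
Qed.

Lemma martingale_coupling p q :
  (forall i, (i <= J)%N -> 0 <= p i) -> (forall i, (i <= J)%N -> 0 <= q i) ->
  mass p = mass q -> mean p = mean q ->
  (forall k, (k <= J)%N -> call_price p k <= call_price q k) ->
  exists K, martingale_kernel K /\ forall k, (k <= J)%N -> kpush p K k = q k.
Proof. exact: (martingale_coupling_card (leqnn _)). Qed.

End GridKernels.

Section MarkovChain.
Variables (R : realFieldType) (J : nat).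
Local Notation walk m := {ffun 'I_m -> 'I_J.+1}.

(* Beyond the length of the walk the junk value is 0. *)
Definition pos m (w : walk m) (i : nat) : nat :=
  if (insub i : option 'I_m) is Some j then val (w j) else 0%N.

Lemma pos_ord m (w : walk m) (j : 'I_m) : pos w j = w j.
Proof.
by rewrite /pos (insubT (fun i => i < m)%N (ltn_ord j)) /=; congr (val (w _)); apply: val_inj.
Qed.

Lemma pos_out m (w : walk m) i : (m <= i)%N -> pos w i = 0%N.
Proof. by move=> h; rewrite /pos insubF // ltnNge h. Qed.

Lemma pos_le m (w : walk m) i : (pos w i <= J)%N.
Proof. by rewrite /pos; case: insub => // j; rewrite -ltnS ltn_ord. Qed.

Lemma ffun_pos m (w : walk m) : [ffun j : 'I_m => inord (pos w j) : 'I_J.+1] = w.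
Proof. by apply/ffunP => j; rewrite ffunE pos_ord inord_val. Qed.

Definition wext m (v : walk m) (k : 'I_J.+1) : walk m.+1 :=
  [ffun i : 'I_m.+1 => if ((i : nat) < m)%N then inord (pos v i) else k].

Lemma pos_wext m (v : walk m) k i :
  pos (wext v k) i = if (i < m)%N then pos v i else if i == m then val k else 0%N.
Proof.
case: (ltnP i m.+1) => h.
  rewrite (pos_ord (wext v k) (Ordinal h)) ffunE /=.
  case: ifP => him; first by rewrite inordK // ltnS pos_le.
  have -> : i = m by apply/eqP; rewrite eqn_leq -ltnS h leqNgt him.
  by rewrite eqxx.
rewrite pos_out // ifF; last by rewrite ltnNge ltnW.
by rewrite ifF //; apply/negbTE; rewrite neq_ltn h orbT.
Qed.

Lemma sum_wext m (F : walk m.+1 -> R) :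
  \sum_(w : walk m.+1) F w = \sum_(v : walk m) \sum_(k : 'I_J.+1) F (wext v k).
Proof.
rewrite pair_big /=.
pose g (w : walk m.+1) := ([ffun j : 'I_m => w (widen_ord (leqnSn m) j)], w ord_max).
rewrite (reindex (fun vk : walk m * 'I_J.+1 => wext vk.1 vk.2)) //.
apply: onW_bij; apply: (@Bijective _ _ _ g).
- case=> v k; rewrite /g /=; congr pair; last by rewrite ffunE /= ltnn.
  by apply/ffunP => j; rewrite !ffunE /= ltn_ord pos_ord inord_val.
- move=> w; apply/ffunP => i; rewrite ffunE; case: ifP => hi.
    apply: val_inj; rewrite /= (pos_ord _ (Ordinal hi)) ffunE /= inordK ?ltn_ord //.
    by congr (val (w _)); apply: val_inj.
  congr (w _); apply: val_inj => /=; apply/eqP.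
  by rewrite eqn_leq (leqNgt m i) hi /= -ltnS; have := ltn_ord i.
Qed.

Lemma sum_walk0 (F : walk 0 -> R) : \sum_(v : walk 0) F v = F [ffun i => ord0].
Proof.
rewrite (eq_bigr (fun=> F [ffun i => ord0])) => [|v _]; last by congr F; apply/ffunP => -[].
by rewrite sumr_const card_ffun !card_ord expn0.
Qed.

Variables (N : nat) (x : nat -> R) (mu : nat -> nat -> R) (K : nat -> nat -> nat -> R).
Hypothesis mu1_ge0 : forall k, (k <= J)%N -> 0 <= mu 1%N k.
Hypothesis mu1_sum : \sum_(k < J.+1) mu 1%N k = 1.
Hypothesis K_mart : forall n, (0 < n < N)%N -> martingale_kernel J x (K n).
Hypothesis mu_push : forall n k, (0 < n < N)%N -> (k <= J)%N ->
  kpush J (mu n) (K n) k = mu n.+1 k.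

(* Step i of a walk is the state at time t_(i+1): it has law mu 1 for i = 0 and moves from
   t_i to t_(i+1) with the kernel K i. *)
Definition step_prob (i : nat) (f : nat -> nat) : R :=
  if i is i'.+1 then K i (f i') (f i) else mu 1%N (f 0%N).
Definition walk_prob m (w : walk m) : R := \prod_(i < m) step_prob i (pos w).

Definition past_measurable m (G : (nat -> nat) -> R) :=
  forall f g, (forall i, (i < m)%N -> f i = g i) -> G f = G g.

Lemma walk_prob_wext m (v : walk m) k :
  walk_prob (wext v k) = walk_prob v * step_prob m (pos (wext v k)).
Proof.
rewrite /walk_prob big_ord_recr /=; congr (_ * _); apply: eq_bigr => i _.
have step_local f g : (forall j, (j <= i)%N -> f j = g j) -> step_prob i f = step_prob i g.
  by case: (nat_of_ord i) => [|i'] h /=; rewrite ?h // ?leqnSn.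
apply: step_local => j hj; rewrite pos_wext ifT //; exact: leq_ltn_trans hj (ltn_ord i).
Qed.

Lemma sum_step_prob m (v : walk m) (h : nat -> R) :
  \sum_(k : 'I_J.+1) step_prob m (pos (wext v k)) * h k =
  if m is m'.+1 then kexp J (K m) h (pos v m') else \sum_(k < J.+1) mu 1%N k * h k.
Proof.
by case: m v => [|m] v /=; apply: eq_bigr => k _; rewrite !pos_wext ?ltnn ?ltnSn ?eqxx.
Qed.

Lemma sum_step_prob1 m (v : walk m) : (m < N)%N ->
  \sum_(k : 'I_J.+1) step_prob m (pos (wext v k)) = 1.
Proof.
move=> hm; have := sum_step_prob v (fun=> 1); under eq_bigr do rewrite mulr1; move=> ->.
case: m v hm => [|m] v hm; first by under eq_bigr do rewrite mulr1.
by have [_ -> _] := K_mart (hm : (0 < m.+1 < N)%N) (pos_le v m).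
Qed.

Lemma sum_walk_prob_restrict m M G : (m <= M)%N -> (M <= N)%N -> past_measurable m G ->
  \sum_(w : walk M) walk_prob w * G (pos w) = \sum_(v : walk m) walk_prob v * G (pos v).
Proof.
elim: M => [|M IH] hmM hMN hG; first by move: hmM; rewrite leqn0 => /eqP ->.
case: (ltngtP m M.+1) => [hm|hm|->] //; last by move: hmM; rewrite leqNgt hm.
rewrite -IH ?(ltnW hMN) // sum_wext; apply: eq_bigr => v _.
have eG k : G (pos (wext v k)) = G (pos v).
  by apply: hG => i hi; rewrite pos_wext ifT //; exact: leq_trans hi hm.
under eq_bigr => k _ do rewrite walk_prob_wext eG.
rewrite -[RHS]mulr1 -(sum_step_prob1 v hMN) mulr_sumr; apply: eq_bigr => k _; ring.
Qed.

Lemma walk_prob_last n G (h : nat -> R) : (n < N)%N -> past_measurable n G ->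
  \sum_(w : walk N) walk_prob w * (G (pos w) * h (pos w n)) =
  \sum_(v : walk n) walk_prob v * (G (pos v) *
     (if n is n'.+1 then kexp J (K n) h (pos v n') else \sum_(k < J.+1) mu 1%N k * h k)).
Proof.
move=> hn hG; rewrite (@sum_walk_prob_restrict n.+1 N (fun f => G f * h (f n))) //; last first.
  by move=> f g hfg; rewrite (hG f g) ?hfg // => i hi; apply: hfg; exact: ltnW.
rewrite sum_wext; apply: eq_bigr => v _.
have eG k : G (pos (wext v k)) = G (pos v) by apply: hG => i hi; rewrite pos_wext hi.
have eh (k : 'I_J.+1) : pos (wext v k) n = k by rewrite pos_wext ltnn eqxx.
under eq_bigr => k _ do rewrite walk_prob_wext eG eh.
rewrite -(sum_step_prob v h) !mulr_sumr; apply: eq_bigr => k _; ring.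
Qed.

Lemma walk_prob_first (h : nat -> R) : (0 < N)%N ->
  \sum_(w : walk N) walk_prob w * h (pos w 0%N) = \sum_(k < J.+1) mu 1%N k * h k.
Proof.
move=> hN; have := @walk_prob_last 0 (fun=> 1) h hN (fun _ _ _ => erefl).
under eq_bigr do rewrite mul1r; move=> ->.
by rewrite sum_walk0 /walk_prob big_ord0 !mul1r.
Qed.

Lemma walk_prob_step n G (h : nat -> R) : (n.+1 < N)%N -> past_measurable n.+1 G ->
  \sum_(w : walk N) walk_prob w * (G (pos w) * h (pos w n.+1)) =
  \sum_(w : walk N) walk_prob w * (G (pos w) * kexp J (K n.+1) h (pos w n)).
Proof.
move=> hn hG; rewrite walk_prob_last // (@sum_walk_prob_restrict n.+1 N
  (fun f => G f * kexp J (K n.+1) h (f n))) //; first exact: ltnW.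
by move=> f g hfg; rewrite (hG f g) ?hfg.
Qed.

Lemma walk_prob_transition n G i0 k : (n.+1 < N)%N -> (k <= J)%N ->
  past_measurable n.+1 G -> (forall f, G f != 0 -> f n = i0) ->
  \sum_(w : walk N) walk_prob w * (G (pos w) * (pos w n.+1 == k)%:R)
  = K n.+1 i0 k * \sum_(w : walk N) walk_prob w * G (pos w).
Proof.
move=> hn hk hG G_supp; rewrite (@walk_prob_step n G (fun m => (m == k)%:R)) //.
rewrite mulr_sumr; apply: eq_bigr => w _.
have -> : kexp J (K n.+1) (fun m => (m == k)%:R) (pos w n) = K n.+1 (pos w n) k.
  exact: kpush_kid.
case: (eqVneq (G (pos w)) 0) => [->|/G_supp ->]; first by rewrite !mul0r !mulr0.
by ring.
Qed.

Lemma walk_prob_martingale n G : (n.+1 < N)%N -> past_measurable n.+1 G ->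
  \sum_(w : walk N) walk_prob w * (G (pos w) * (x (pos w n.+1) - x (pos w n))) = 0.
Proof.
move=> hn hG; under eq_bigr do rewrite mulrBr mulrBr.
rewrite sumrB (@walk_prob_step n G x) //; apply/eqP; rewrite subr_eq0; apply/eqP.
apply: eq_bigr => w _.
by have [_ _ ->] := K_mart (hn : (0 < n.+1 < N)%N) (pos_le w n).
Qed.

Lemma walk_prob_marginal n (h : nat -> R) : (n < N)%N ->
  \sum_(w : walk N) walk_prob w * h (pos w n) = \sum_(k < J.+1) mu n.+1 k * h k.
Proof.
elim: n h => [|n IH] h hn; first exact: walk_prob_first.
have := @walk_prob_step n (fun=> 1) h hn (fun _ _ _ => erefl).
under eq_bigr do rewrite mul1r; move=> ->; under eq_bigr do rewrite mul1r.
rewrite IH ?(ltnW hn) // -sum_kpush; apply: eq_bigr => k _.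
by rewrite mu_push ?leq_ord.
Qed.

Lemma walk_prob_ge0 (w : walk N) : 0 <= walk_prob w.
Proof.
apply: prodr_ge0 => -[[|i] hi] _ /=; first exact: mu1_ge0 (pos_le _ _).
by have [K0 _ _] := K_mart (hi : (0 < i.+1 < N)%N) (pos_le w i); apply/K0/pos_le.
Qed.

Lemma walk_prob_sum1 : \sum_(w : walk N) walk_prob w = 1.
Proof.
under eq_bigr do rewrite -[walk_prob _]mulr1.
by rewrite (@sum_walk_prob_restrict 0 N (fun=> 1)) // sum_walk0 /walk_prob big_ord0 mulr1.
Qed.

End MarkovChain.

Section CallMarket.
Variables (R : realFieldType) (N J : nat) (s0 : R) (x : nat -> R) (c : nat -> nat -> R).
Hypothesis J_gt0 : (0 < J)%N.
Hypothesis x0 : x 0%N = 0.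
Hypothesis x_incr : forall j, (j < J)%N -> x j < x j.+1.
Hypothesis hC1 : C1 N J s0 c.
Hypothesis hC2 : C2 N J x c.
Hypothesis hC3 : C3 N J c.
Hypothesis hC4 : C4 N J c.

Definition marginal (n k : nat) : R := pj J s0 x c k n.

Lemma call_le_later j n m : (j <= J)%N -> (0 < n)%N -> (n <= m <= N)%N -> c j n <= c j m.
Proof.
move=> hj n0 /andP[]; elim: m => [|m IH]; first by rewrite leqn0 => /eqP n_eq0; rewrite n_eq0 in n0.
rewrite leq_eqVlt => /orP[/eqP <- _|nm mN]; first exact: lexx.
by apply: le_trans (IH nm (ltnW mN)) _; apply: hC3; rewrite // mN (leq_trans n0 nm).
Qed.

Lemma callJ_eq0 n : (0 < n <= N)%N -> c J n = 0.
Proof.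
move=> hn; have [_ _ cJ_ge0] := hC1 hn; apply/eqP; rewrite eq_le cJ_ge0 andbT -hC4.
by case/andP: hn => n0 nN; apply: call_le_later; rewrite // nN leqnn.
Qed.

Lemma tail_mass_marginal n k : (0 < n <= N)%N -> (0 < k <= J)%N ->
  tail_mass J (marginal n) k = slope x c k n.
Proof.
move=> hn /andP[k0 kJ]; have := subnKC kJ; move: (J - k)%N => d.
elim: d k k0 {kJ} => [|d IH] k k0 kdJ.
  rewrite addn0 in kdJ; subst k.
  by rewrite tail_massS // tail_mass_end addr0 /marginal /pj gtn_eqF // ltnn.
have kJ : (k < J)%N by rewrite -kdJ addnS ltnS leq_addr.
rewrite tail_massS ?(ltnW kJ) // IH //; last by rewrite addSnnS.
by rewrite /marginal /pj gtn_eqF // kJ subrK.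
Qed.

Lemma mass_marginal n : (0 < n <= N)%N -> mass J (marginal n) = 1.
Proof.
move=> hn; have [c0 _ _] := hC1 hn.
rewrite -tail_mass0 tail_massS // tail_mass_marginal ?J_gt0 // /slope /= c0 x0 subr0.
by rewrite /marginal /pj eqxx subrK.
Qed.

Lemma call_price_marginal n k : (0 < n <= N)%N -> (k <= J)%N ->
  call_price J x (marginal n) k = c k n.
Proof.
move=> hn kJ; have := subnKC kJ; move: (J - k)%N => d; elim: d k {kJ} => [|d IH] k kdJ.
  by rewrite addn0 in kdJ; subst k; rewrite call_priceJ // callJ_eq0.
have kJ : (k < J)%N by rewrite -kdJ addnS ltnS leq_addr.
have x_gap : x k.+1 - x k != 0 by rewrite subr_eq0 gt_eqF // x_incr.
have := call_price_diff x_incr (marginal n) (kJ : (0 < k.+1 <= J)%N).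
rewrite (IH k.+1); last by rewrite addSnnS.
rewrite tail_mass_marginal // /slope /= mulrC divfK //.
by move/addIr.
Qed.

Lemma mean_marginal n : (0 < n <= N)%N -> mean J x (marginal n) = s0.
Proof.
move=> hn; have [c0 _ _] := hC1 hn.
by have := call_price0 x_incr (marginal n); rewrite call_price_marginal // x0 mul0r subr0 c0.
Qed.

Lemma marginal_ge0 n k : (0 < n <= N)%N -> 0 <= marginal n k.
Proof.
move=> hn; have [c0 c_decr _] := hC1 hn; have [slope1_le1 slope_decr] := hC2 hn.
rewrite /marginal /pj; case: eqP => [_|/eqP k_neq0]; first by rewrite subr_ge0 -c0.
case: ifP => [kJ'|_]; first by rewrite subr_ge0 slope_decr // lt0n k_neq0.
have hJ : (J.-1 < J)%N by rewrite prednK.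
rewrite /slope divr_ge0 // subr_ge0; first by have := c_decr _ hJ; rewrite prednK.
by apply/ltW; have := x_incr hJ; rewrite prednK.
Qed.

Lemma marginal_coupling n : (0 < n < N)%N -> exists K, martingale_kernel J x K /\
  forall k, (k <= J)%N -> kpush J (marginal n) K k = marginal n.+1 k.
Proof.
case/andP=> n0 nN; have hn : (0 < n <= N)%N by rewrite n0 ltnW.
have hn1 : (0 < n.+1 <= N)%N by [].
apply: (martingale_coupling x_incr) => [i _|i _|||k kJ].
- exact: marginal_ge0 hn.
- exact: marginal_ge0 hn1.
- by rewrite (mass_marginal hn) (mass_marginal hn1).
- by rewrite (mean_marginal hn) (mean_marginal hn1).
- by rewrite (call_price_marginal hn kJ) (call_price_marginal hn1 kJ) hC3 // n0.
Qed.

Lemma marginal_kernels : exists K : nat -> nat -> nat -> R, forall n, (0 < n < N)%N ->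
  martingale_kernel J x (K n) /\
  forall k, (k <= J)%N -> kpush J (marginal n) (K n) k = marginal n.+1 k.
Proof.
have coupling_at (i : 'I_N.+1) : exists K, (0 < i < N)%N -> martingale_kernel J x K /\
    forall k, (k <= J)%N -> kpush J (marginal i) K k = marginal i.+1 k.
  case: (boolP (0 < i < N)%N) => [/marginal_coupling [K hK]|_]; first by exists K.
  by exists (kid R).
have [u hu] := fin_all_exists coupling_at.
exists (fun n => u (inord n)) => n hn; have nN : (n <= N)%N by case/andP: hn => _ /ltnW.
by have := hu (inord n); rewrite inordK ?ltnS //; apply.
Qed.

Hypothesis N_gt0 : (0 < N)%N.
Variable K : nat -> nat -> nat -> R.
Hypothesis K_mart : forall n, (0 < n < N)%N -> martingale_kernel J x (K n).
Hypothesis K_push : forall n k, (0 < n < N)%N -> (k <= J)%N ->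
  kpush J (marginal n) (K n) k = marginal n.+1 k.

Let marginal1_ge0 k : 0 <= marginal 1 k.
Proof. by apply: marginal_ge0; rewrite N_gt0. Qed.
Let marginal1_sum : \sum_(k < J.+1) marginal 1 k = 1.
Proof. by apply: mass_marginal; rewrite N_gt0. Qed.

Definition walk_law : {ffun Defs.path N J -> R} := [ffun w => walk_prob marginal K w].

Let walk_prob_marginal_ge0 (w : Defs.path N J) : 0 <= walk_prob marginal K w.
Proof. exact: walk_prob_ge0 (fun k _ => marginal1_ge0 k) K_mart w. Qed.
Let walk_prob_marginal_sum1 : \sum_(w : Defs.path N J) walk_prob marginal K w = 1.
Proof. exact: walk_prob_sum1 marginal1_sum K_mart. Qed.

Lemma walk_law_ge0 w : 0 <= walk_law w.
Proof. by rewrite ffunE. Qed.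

Lemma walk_law_sum1 : \sum_w walk_law w = 1.
Proof. by under eq_bigr do rewrite ffunE. Qed.

Lemma Xt_succ (w : Defs.path N J) n : Xt s0 x w n.+1 = x (pos w n).
Proof. by rewrite /Xt /pos; case: insub => [j|] //=; rewrite x0. Qed.

Lemma Xt_succ_eq (w : Defs.path N J) n j : (j <= J)%N ->
  (Xt s0 x w n.+1 == x j) = (pos w n == j).
Proof. by move=> jJ; rewrite Xt_succ (x_eq x_incr) ?pos_le. Qed.

Lemma prob_walk_law (A : pred (Defs.path N J)) :
  prob walk_law A = \sum_(w : Defs.path N J) walk_prob marginal K w * (A w)%:R.
Proof.
rewrite /prob big_mkcond; apply: eq_bigr => w _.
by rewrite ffunE; case: (A w); rewrite ?mulr1 ?mulr0.
Qed.

Lemma walk_law_martingale n G : (n < N)%N -> past_measurable n G ->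
  \sum_(w : Defs.path N J)
    walk_prob marginal K w * (G (pos w) * (Xt s0 x w n.+1 - Xt s0 x w n)) = 0.
Proof.
case: n => [|n] hn hG; last first.
  under eq_bigr do rewrite !Xt_succ.
  by apply: (walk_prob_martingale marginal1_sum K_mart hn).
have G_const w : G (pos w) = G (fun=> 0%N) by exact: hG.
under eq_bigr do rewrite G_const Xt_succ mulrCA.
rewrite -mulr_sumr (walk_prob_first marginal1_sum K_mart (fun k => x k - s0) N_gt0).
under eq_bigr do rewrite mulrBr; rewrite sumrB -mulr_suml marginal1_sum mul1r.
by have := mean_marginal (n := 1); rewrite /mean => -> //; rewrite ?subrr ?mulr0 ?N_gt0.
Qed.

Lemma expected_call j n : (j <= J)%N -> (0 < n <= N)%N ->
  \sum_(w : Defs.path N J) walk_prob marginal K w * Num.max 0 (Xt s0 x w n - x j) = c j n.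
Proof.
case: n => [|n] // jJ hn; under eq_bigr do rewrite Xt_succ.
rewrite (walk_prob_marginal marginal1_sum K_mart K_push (fun m => Num.max 0 (x m - x j)) hn).
exact: call_price_marginal.
Qed.

Lemma walk_law_marginal n j : (0 < n <= N)%N -> (j <= J)%N ->
  prob walk_law [pred w | Xt s0 x w n == x j] = pj J s0 x c j n.
Proof.
case: n => [|n] // hn jJ; rewrite prob_walk_law.
under eq_bigr do rewrite /= Xt_succ_eq //.
rewrite (walk_prob_marginal marginal1_sum K_mart K_push (fun m => (m == j)%:R) hn).
exact: kpush_kid.
Qed.

Definition agrees_with n (w0 : Defs.path N J) (f : nat -> nat) : bool :=
  [forall i : 'I_N, ((i : nat) < n)%N ==> (f i == w0 i)].

Lemma agree_pos n (w w0 : Defs.path N J) : agree n w w0 = agrees_with n w0 (pos w).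
Proof. by apply: eq_forallb => i; rewrite pos_ord. Qed.

Lemma past_measurable_agrees n w0 : past_measurable n (fun f => (agrees_with n w0 f)%:R : R).
Proof.
move=> f g hfg; suff -> : agrees_with n w0 f = agrees_with n w0 g by [].
by apply: eq_forallb => i; case: (ltnP i n) => // hi; rewrite hfg.
Qed.

Lemma walk_law_martingale_step n w0 : (n < N)%N ->
  \sum_(w | agree n w w0) walk_law w * (Xt s0 x w n.+1 - Xt s0 x w n) = 0.
Proof.
move=> hn; rewrite -[RHS](walk_law_martingale hn (@past_measurable_agrees n w0)).
rewrite big_mkcond; apply: eq_bigr => w _; rewrite ffunE agree_pos.
by case: (agrees_with n w0 (pos w)); rewrite ?mul1r ?mul0r ?mulr0.
Qed.

Lemma prob_walk_law_pos (A : pred (Defs.path N J)) (B : (nat -> nat) -> bool) :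
  (forall w, A w = B (pos w)) ->
  prob walk_law A = \sum_(w : Defs.path N J) walk_prob marginal K w * (B (pos w))%:R.
Proof. by move=> AB; rewrite prob_walk_law; apply: eq_bigr => w _; rewrite AB. Qed.

Lemma prob_walk_law_next n k i0 (B : (nat -> nat) -> bool) : (n.+1 < N)%N -> (k <= J)%N ->
  past_measurable n.+1 (fun f => (B f)%:R : R) -> (forall f, B f -> f n = i0) ->
  prob walk_law [pred w | B (pos w) && (pos w n.+1 == k)]
  = K n.+1 i0 k * \sum_(w : Defs.path N J) walk_prob marginal K w * (B (pos w))%:R.
Proof.
move=> hn kJ hB B_supp; rewrite -(walk_prob_transition marginal1_sum K_mart hn kJ hB).
  by rewrite prob_walk_law; apply: eq_bigr => w _; rewrite /= -mulnb natrM.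
by move=> f; case: (boolP (B f)) => [/B_supp|]; rewrite ?eqxx.
Qed.

Lemma walk_law_markov n w0 k : (0 < n < N)%N -> (k <= J)%N ->
  prob walk_law [pred w | agree n w w0 && (Xt s0 x w n.+1 == x k)]
    * prob walk_law [pred w | Xt s0 x w n == Xt s0 x w0 n]
  = prob walk_law [pred w | agree n w w0]
    * prob walk_law [pred w | (Xt s0 x w n == Xt s0 x w0 n) && (Xt s0 x w n.+1 == x k)].
Proof.
case: n => [|n] // /andP[_ hn] kJ; set i0 := pos w0 n.
have next_step B := @prob_walk_law_next n k i0 B hn kJ.
have Xt_w0 (w : Defs.path N J) : (Xt s0 x w n.+1 == Xt s0 x w0 n.+1) = (pos w n == i0).
  by rewrite [Xt _ _ w0 _]Xt_succ Xt_succ_eq ?pos_le.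
have agrees_last f : agrees_with n.+1 w0 f -> f n = i0.
  move/forallP/(_ (Ordinal (ltnW hn))); rewrite ltnSn => /eqP ->.
  by rewrite /i0 -(pos_ord w0 (Ordinal (ltnW hn))).
have pA1 := next_step _ (@past_measurable_agrees n.+1 w0) agrees_last.
have pos_n_measurable : past_measurable n.+1 (fun f => (f n == i0)%:R : R).
  by move=> f g fg; rewrite fg.
have pB1 := next_step (fun f => f n == i0) pos_n_measurable (fun f => @eqP _ _ _).
have -> : prob walk_law [pred w | agree n.+1 w w0 && (Xt s0 x w n.+2 == x k)]
    = prob walk_law [pred w | agrees_with n.+1 w0 (pos w) && (pos w n.+1 == k)].
  by apply: eq_bigl => w; rewrite /= agree_pos Xt_succ_eq.
have -> : prob walk_law [pred w | (Xt s0 x w n.+1 == Xt s0 x w0 n.+1) && (Xt s0 x w n.+2 == x k)]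
    = prob walk_law [pred w | (pos w n == i0) && (pos w n.+1 == k)].
  by apply: eq_bigl => w; rewrite /= Xt_w0 Xt_succ_eq.
have pA0 : prob walk_law [pred w | agree n.+1 w w0]
    = \sum_(w : Defs.path N J) walk_prob marginal K w * (agrees_with n.+1 w0 (pos w))%:R.
  by apply: (prob_walk_law_pos (B := agrees_with n.+1 w0)) => w; rewrite /= agree_pos.
have pB0 : prob walk_law [pred w | Xt s0 x w n.+1 == Xt s0 x w0 n.+1]
    = \sum_(w : Defs.path N J) walk_prob marginal K w * (pos w n == i0)%:R.
  by apply: (prob_walk_law_pos (B := fun f => f n == i0)) => w; exact: Xt_w0.
by rewrite pA1 pB1 pA0 pB0; ring.
Qed.

Lemma markov_model_walk_law : markov_model s0 x c walk_law.
Proof.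
split=> [||n j|n w0|n w0 k]; first exact: walk_law_ge0; first exact: walk_law_sum1.
- exact: walk_law_marginal.
- exact: walk_law_martingale_step.
- exact: walk_law_markov.
Qed.

Lemma expected_gain (delta : nat -> Defs.path N J -> R) n : adapted delta -> (n < N)%N ->
  \sum_(w : Defs.path N J)
    walk_prob marginal K w * (delta n w * (Xt s0 x w n.+1 - Xt s0 x w n)) = 0.
Proof.
move=> delta_adapted hn.
pose G (f : nat -> nat) := delta n [ffun j : 'I_N => inord (f j) : 'I_J.+1].
have hG : past_measurable n G.
  move=> f g fg; apply: delta_adapted; apply/forallP => i; apply/implyP => hi.
  by rewrite !ffunE fg.
by rewrite -[RHS](walk_law_martingale hn hG); apply: eq_bigr => w _; rewrite /G ffun_pos.
Qed.

Lemma expected_payoff b a delta : adapted delta ->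
  \sum_(w : Defs.path N J) walk_prob marginal K w * payoff s0 x b a delta w = cost N J c b a.
Proof.
move=> delta_adapted; rewrite /payoff /cost.
under eq_bigr do rewrite !mulrDr.
rewrite !big_split /= -mulr_suml walk_prob_marginal_sum1 mul1r.
have -> : \sum_(w : Defs.path N J) walk_prob marginal K w *
    (\sum_(0 <= n < N) delta n w * (Xt s0 x w n.+1 - Xt s0 x w n)) = 0.
  under eq_bigr do rewrite mulr_sumr.
  rewrite exchange_big /=; apply: big1_seq => n; rewrite mem_index_iota => /andP[_ hn].
  exact: expected_gain.
rewrite addr0; congr (_ + _).
under eq_bigr do rewrite mulr_sumr.
rewrite exchange_big /=; apply: eq_big_nat => j jJ.
under eq_bigr do rewrite mulr_sumr.
rewrite exchange_big /=; apply: eq_big_nat => n hn.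
under eq_bigr do rewrite mulrCA.
by rewrite -mulr_sumr expected_call.
Qed.

Lemma no_arbitrage : ~ arbitrage N J s0 x c.
Proof.
move=> [b [a [delta [delta_adapted cost_le0 payoff_gt0]]]].
suff : 0 < cost N J c b a by lra.
rewrite -(expected_payoff b a delta_adapted).
exact: expectation_gt0 walk_prob_marginal_ge0 walk_prob_marginal_sum1 payoff_gt0.
Qed.

End CallMarket.

Theorem mainTheorem2 (R : realFieldType) (N J : nat) (t : nat -> R) (s0 : R)
    (x : nat -> R) (c : nat -> nat -> R) :
  (1 <= N)%N -> (1 <= J)%N ->
  t 0%N = 0 -> (forall n, (n < N)%N -> t n < t n.+1) ->
  0 < s0 -> x 0%N = 0 -> (forall j, (j < J)%N -> x j < x j.+1) ->
  C1 N J s0 c -> C2 N J x c -> C3 N J c -> C4 N J c ->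
  (exists P, @markov_model R N J s0 x c P) /\ ~ arbitrage N J s0 x c.
Proof.
move=> N_gt0 J_gt0 _ _ _ x0 x_incr hC1 hC2 hC3 hC4.
have [K hK] := marginal_kernels J_gt0 x0 x_incr hC1 hC2 hC3 hC4.
have K_mart n hn := (hK n hn).1; have K_push n k hn := (hK n hn).2 k.
split; first by eexists; exact: markov_model_walk_law K_mart K_push.
exact: no_arbitrage K_mart K_push.
Qed.
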